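(* Let $\Gamma_1=(V_1,E_1)$ be a simple undirected graph with a strong edge coloring $\mathcal{E}_1$ with colors from $\mathcal{S}^\circ$, and let $\Gamma_2=(V_2,W_2,E_2)$ be a bipartite graph with a strong edge coloring $\mathcal{E}_2$ with colors from $\mathcal{S}_2$. Let $\mathcal{S}_\circ$ be a set disjoint from $\mathcal{S}^\circ$ with a bijection $\sigma:\mathcal{S}^\circ\to\mathcal{S}_\circ$, and let $\mathcal{E}^\circ,\mathcal{E}_\circ$ be opposing orientations of $\mathcal{E}_1$ with colors from $\mathcal{S}^\circ$ and $\mathcal{S}_\circ$ respectively: for each edge $\{x,u\}\in E_1$ of color $s$, one chosen direction $\langle x,u\rangle$ receives $(\langle x,u\rangle,s)\in\mathcal{E}^\circ$ and the reverse direction receives $(\langle u,x\rangle,\sigma(s))\in\mathcal{E}_\circ$. Let $\mathcal{V}$ be a proper vertex coloring of $\Gamma_1$ with colors from a set $\mathcal{S}'$ disjoint from $\mathcal{S}^\circ\cup\mathcal{S}_\circ$. Let $\Gamma=\Gamma_1:\Gamma_2$ be the bipartite graph with vertex classes $V_1\times V_2$ and $V_1\times W_2$ and edge set $E=\{((x,y),(u,v)) : (y,v)\in E_2, \text{ and } x=u \text{ or } \{x,u\}\in E_1\}$. Then $$\mathcal{E}=\{((x,y),(u,v),(s,s_2)) : (y,v,s_2)\in\mathcal{E}_2; \text{ and either } x=u \text{ with } (x,s)\in\mathcal{V}, \text{ or } (\langle x,u\rangle,s)\in\mathcal{E}^\circ\cup\mathcal{E}_\circ\}$$ is a strong edge coloring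 of $\Gamma$ with colors from $(\mathcal{S}'\cup\mathcal{S}^\circ\cup\mathcal{S}_\circ)\times\mathcal{S}_2$.
   Context: A vertex coloring is written as a set of pairs $(v,s)$, $v$ a vertex and $s$ its color; proper means adjacent vertices get different colors. $\langle x,u\rangle$ denotes the directed edge $x\to u$. For an undirected graph, an edge coloring assigns one color to each edge so that edges sharing a vertex get different colors; it is a strong edge coloring if in addition no two distinct edges of the same color are both adjacent to (share a vertex with) a common edge, i.e. each color class is an induced matching. A bipartite graph is written $(V,W,E)$ with $V\cap W=\emptyset$, $E\subseteq V\times W$, and an edge coloring of it is written as a set of triples $(v,w,s)$ with each edge occurring with exactly one color; the strong condition is the same: if $(v,w,s),(v',w',s)$ are distinct then $v\neq v'$, $w\ne w'$, and neither $(v,w')$ nor $(v',w)$ is an edge. *)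

Definition simple_graph {V : Type} (E : V -> V -> Prop) : Prop :=
  (forall x u, E x u -> E u x) /\ (forall x, ~ E x x).

(* Strong edge coloring of an undirected graph (V,E) with colors from S:
   c assigns to each edge {x,u} the color c x u (= c u x); each color class
   is an induced matching. *)
Definition strong_edge_coloring {V C : Type} (E : V -> V -> Prop)
  (c : V -> V -> C) (S : C -> Prop) : Prop :=
  (forall x u, E x u -> c x u = c u x) /\
  (forall x u, E x u -> S (c x u)) /\
  (forall x u x' u', E x u -> E x' u' -> c x u = c x' u' ->
     ~ ((x = x' /\ u = u') \/ (x = u' /\ u = x')) ->
     x <> x' /\ x <> u' /\ u <> x' /\ u <> u' /\
     ~ E x x' /\ ~ E x u' /\ ~ E u x' /\ ~ E u u').

Definition proper_vertex_coloring {V C : Type} (E : V -> V -> Prop)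
  (vc : V -> C) (S : C -> Prop) : Prop :=
  (forall x, S (vc x)) /\ (forall x u, E x u -> vc x <> vc u).

Definition strong_bip_edge_coloring {V W C : Type} (E : V -> W -> Prop)
  (col : V -> W -> C -> Prop) (S : C -> Prop) : Prop :=
  (forall v w s, col v w s -> E v w /\ S s) /\
  (forall v w, E v w -> exists s, col v w s /\ forall s', col v w s' -> s' = s) /\
  (forall v w s v' w', col v w s -> col v' w' s -> (v, w) <> (v', w') ->
     v <> v' /\ w <> w' /\ ~ E v w' /\ ~ E v' w).

Definition orientation {V : Type} (E : V -> V -> Prop) (O : V -> V -> Prop) : Prop :=
  (forall x u, O x u -> E x u) /\
  (forall x u, E x u -> (O x u /\ ~ O u x) \/ (O u x /\ ~ O x u)).

Definition E_up {V C : Type} (O : V -> V -> Prop) (c : V -> V -> C)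
  (x u : V) (s : C) : Prop := O x u /\ s = c x u.

Definition E_down {V C : Type} (O : V -> V -> Prop) (c : V -> V -> C)
  (sigma : C -> C) (x u : V) (s : C) : Prop := O u x /\ s = sigma (c x u).

Definition bijection_on {C : Type} (sigma : C -> C) (Sc Sl : C -> Prop) : Prop :=
  (forall s, Sc s -> Sl (sigma s)) /\
  (forall s t, Sc s -> Sc t -> sigma s = sigma t -> s = t) /\
  (forall t, Sl t -> exists s, Sc s /\ sigma s = t).

Definition colon_edge {V1 V2 W2 : Type} (E1 : V1 -> V1 -> Prop)
  (E2 : V2 -> W2 -> Prop) (p : V1 * V2) (q : V1 * W2) : Prop :=
  E2 (snd p) (snd q) /\ ((fst p) = (fst q) \/ E1 (fst p) (fst q)).

Definition colon_coloring {V1 V2 W2 C C2 : Type} (O : V1 -> V1 -> Prop)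
  (c1 : V1 -> V1 -> C) (sigma : C -> C) (vc : V1 -> C)
  (col2 : V2 -> W2 -> C2 -> Prop)
  (p : V1 * V2) (q : V1 * W2) (t : C * C2) : Prop :=
  col2 (snd p) (snd q) (snd t) /\
  (((fst p) = (fst q) /\ vc (fst p) = (fst t)) \/
   E_up O c1 (fst p) (fst q) (fst t) \/ E_down O c1 sigma (fst p) (fst q) (fst t)).

From Stdlib Require Import Classical.

(* The graph Γ1 : Γ2 is the bipartite tensor product of two bipartite graphs:
   the "looped double cover" of Γ1 (classes V1 and V1, with x joined to u iff
   x = u or {x,u} ∈ E1) and Γ2; the coloring ℰ is the product of a coloring of
   the looped cover with ℰ2.  Two edges
      with the same color either differ in the second factor (and the strong
      condition of ℰ2 separates them) or agree there and differ in the first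
      factor (and the strong condition of the first coloring separates them).
   2. The looped cover: loops get the vertex color, an edge {x,u} gets s in the
      chosen direction and σ(s) in the other.  Because the three palettes are
      disjoint, two edges with the same color are of the same kind; loops are
      then separated by properness of 𝒱, and genuine edges by the strong
      condition of ℰ1 (injectivity of σ reduces the reversed case to it, and
      the orientation excludes an edge meeting its own reverse). *)

Definition tensor_edge {A B V2 W2 : Type} (D : A -> B -> Prop)
  (E2 : V2 -> W2 -> Prop) (p : A * V2) (q : B * W2) : Prop :=
  E2 (snd p) (snd q) /\ D (fst p) (fst q).

Definition tensor_coloring {A B V2 W2 C1 C2 : Type}
  (K : A -> B -> C1 -> Prop) (col2 : V2 -> W2 -> C2 -> Prop)
  (p : A * V2) (q : B * W2) (t : C1 * C2) : Prop :=
  col2 (snd p) (snd q) (snd t) /\ K (fst p) (fst q) (fst t).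

Section TensorProduct.

Variables (A B V2 W2 C1 C2 : Type).
Variables (D : A -> B -> Prop) (E2 : V2 -> W2 -> Prop).
Variables (K : A -> B -> C1 -> Prop) (col2 : V2 -> W2 -> C2 -> Prop).
Variables (S1 : C1 -> Prop) (S2 : C2 -> Prop).
Hypothesis hK : strong_bip_edge_coloring D K S1.
Hypothesis hcol2 : strong_bip_edge_coloring E2 col2 S2.

(* The strong condition of the product: two distinct edges of the same color
   are separated by whichever factor they differ in. *)
Lemma tensor_strong_condition {a : A} {y : V2} {b : B} {w : W2} {t : C1 * C2}
  {a' : A} {y' : V2} {b' : B} {w' : W2} :
  tensor_coloring K col2 (a, y) (b, w) t ->
  tensor_coloring K col2 (a', y') (b', w') t ->
  ((a, y), (b, w)) <> ((a', y'), (b', w')) ->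
  (a, y) <> (a', y') /\ (b, w) <> (b', w') /\
  ~ tensor_edge D E2 (a, y) (b', w') /\ ~ tensor_edge D E2 (a', y') (b, w).
Proof.
  destruct hK as [_ [_ K_strong]], hcol2 as [_ [_ col2_strong]].
  unfold tensor_coloring, tensor_edge; simpl.
  intros [Hc2 Hk] [Hc2' Hk'] Hne.
  destruct (classic ((y, w) = (y', w'))) as [Hsame | Hdiff].
  - injection Hsame as <- <-.
    assert (Hab : (a, b) <> (a', b')) by congruence.
    destruct (K_strong _ _ _ _ _ Hk Hk' Hab) as [Ha [Hb [Hab' Ha'b]]].
    repeat split; try congruence; tauto.
  - destruct (col2_strong _ _ _ _ _ Hc2 Hc2' Hdiff) as [Hy [Hw [Hyw' Hy'w]]].
    repeat split; try congruence; tauto.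
Qed.

Lemma tensor_strong_coloring :
  strong_bip_edge_coloring (tensor_edge D E2) (tensor_coloring K col2)
    (fun t : C1 * C2 => S1 (fst t) /\ S2 (snd t)).
Proof.
  destruct hK as [K_sound [K_unique _]], hcol2 as [col2_sound [col2_unique _]].
  split; [| split].
  - intros p q t [Hc2 Hk].
    destruct (K_sound _ _ _ Hk), (col2_sound _ _ _ Hc2).
    unfold tensor_edge; tauto.
  - intros p q [He2 Hd].
    destruct (K_unique _ _ Hd) as [s1 [Hs1 Hs1_unique]].
    destruct (col2_unique _ _ He2) as [s2 [Hs2 Hs2_unique]].
    exists (s1, s2); split; [split; assumption |].
    intros [t1 t2] [Ht2 Ht1]; simpl in *.
    rewrite (Hs1_unique _ Ht1), (Hs2_unique _ Ht2); reflexivity.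
  - intros [a y] [b w] t [a' y'] [b' w'] Ht Ht' Hne.
    exact (tensor_strong_condition Ht Ht' Hne).
Qed.

End TensorProduct.

Definition looped {V : Type} (E : V -> V -> Prop) (x u : V) : Prop :=
  x = u \/ E x u.

Definition looped_coloring {V C : Type} (O : V -> V -> Prop) (c : V -> V -> C)
  (sigma : C -> C) (vc : V -> C) (x u : V) (s : C) : Prop :=
  (x = u /\ vc x = s) \/ E_up O c x u s \/ E_down O c sigma x u s.

Section LoopedCover.

Variables (V C : Type) (E : V -> V -> Prop) (c : V -> V -> C).
Variables (Sc Sl Sp : C -> Prop) (sigma : C -> C) (O : V -> V -> Prop).
Variable (vc : V -> C).
Hypothesis hG : simple_graph E.
Hypothesis hc : strong_edge_coloring E c Sc.
Hypothesis hdisj_arcs : forall s, ~ (Sc s /\ Sl s).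
Hypothesis hsigma : bijection_on sigma Sc Sl.
Hypothesis hO : orientation E O.
Hypothesis hdisj_vertex : forall s, ~ (Sp s /\ (Sc s \/ Sl s)).
Hypothesis hvc : proper_vertex_coloring E vc Sp.

Lemma orientation_antisym {x u : V} : O x u -> ~ O u x.
Proof.
  destruct hO as [OE Oor]; intros Hxu Hux.
  destruct (Oor _ _ (OE _ _ Hxu)); tauto.
Qed.

Lemma looped_coloring_cases {x u : V} {s : C} :
  looped_coloring O c sigma vc x u s ->
  (x = u /\ s = vc x /\ Sp s) \/
  (E x u /\ O x u /\ s = c x u /\ Sc s) \/
  (E x u /\ O u x /\ s = sigma (c x u) /\ Sl s).
Proof.
  destruct hG as [Esym _], hc as [_ [cS _]], hsigma as [sigS _].
  destruct hO as [OE _], hvc as [vcS _].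
  intros [[<- <-] | [[Ho ->] | [Ho ->]]].
  - left; repeat split; auto.
  - right; left; repeat split; auto.
  - assert (E x u) by (apply Esym, OE, Ho).
    right; right; repeat split; auto.
Qed.

Lemma same_edge_color_separated (x u x' u' : V) :
  E x u -> E x' u' -> c x u = c x' u' ->
  (x, u) <> (x', u') -> ~ (x = u' /\ u = x') ->
  x <> x' /\ u <> u' /\ ~ looped E x u' /\ ~ looped E x' u.
Proof.
  destruct hc as [_ [_ c_strong]]; unfold looped.
  intros He He' Hcol Hne Hnrev.
  assert (Hdistinct : ~ ((x = x' /\ u = u') \/ (x = u' /\ u = x'))).
  { intros [[-> ->] | Hrev]; [congruence | contradiction]. }
  destruct (c_strong _ _ _ _ He He' Hcol Hdistinct) as [? [? [? [? [? [? [? ?]]]]]]].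
  repeat split; auto; intros [Heq | Hadj];
    first [congruence | tauto | apply (proj1 hG) in Hadj; tauto].
Qed.

Lemma looped_strong_condition {x u : V} {s : C} {x' u' : V} :
  looped_coloring O c sigma vc x u s -> looped_coloring O c sigma vc x' u' s ->
  (x, u) <> (x', u') ->
  x <> x' /\ u <> u' /\ ~ looped E x u' /\ ~ looped E x' u.
Proof.
  destruct hc as [_ [cS _]], hsigma as [_ [sig_inj _]].
  intros Hk Hk' Hne.
  destruct (looped_coloring_cases Hk) as [[<- [-> Hs]] | [[He [Ho [-> Hs]]] | [He [Ho [-> Hs]]]]];
  destruct (looped_coloring_cases Hk') as [[<- [Hv Hs']] | [[He' [Ho' [Hv Hs']]] | [He' [Ho' [Hv Hs']]]]];
  rewrite ?Hv in *;
  (* colors of different kinds lie in disjoint palettes *)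
  try solve [exfalso; match goal with
             | _ : Sp ?t |- _ => apply (hdisj_vertex t); tauto
             | _ : Sc ?t |- _ => apply (hdisj_arcs t); tauto
             end].
  - (* two loops: distinct vertices of the same color are non-adjacent *)
    assert (x <> x') by congruence.
    unfold looped; repeat split; auto; intros [Heq | Hadj]; auto;
      apply (proj2 hvc _ _ Hadj); congruence.
  - (* same color in the chosen direction: the edges cannot be reverse *)
    apply same_edge_color_separated; auto.
    intros [-> ->]; exact (orientation_antisym Ho Ho').
  - (* same color in the reversed direction: σ is injective on Sc *)
    apply same_edge_color_separated; [assumption | assumption | | assumption |].
    + apply sig_inj; auto.
    + intros [-> ->]; exact (orientation_antisym Ho Ho').
Qed.

Lemma looped_strong_coloring :
  strong_bip_edge_coloring (looped E) (looped_coloring O c sigma vc)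
    (fun s => Sp s \/ Sc s \/ Sl s).
Proof.
  destruct hG as [_ Eirr].
  split; [| split].
  - intros x u s Hk; unfold looped.
    destruct (looped_coloring_cases Hk) as [[? [? ?]] | [[? ?] | [? ?]]]; tauto.
  - intros x u [<- | He].
    + exists (vc x); split; [left; auto |].
      intros s Hk; destruct (looped_coloring_cases Hk) as [[_ [-> _]] | [[Hxx _] | [Hxx _]]];
        [reflexivity | contradiction (Eirr x) ..].
    + destruct (proj2 hO _ _ He) as [[Ho Hno] | [Ho Hno]].
      * exists (c x u); split; [right; left; split; auto |].
        intros s Hk; destruct (looped_coloring_cases Hk) as [[-> _] | [[_ [_ [-> _]]] | [_ [Hux _]]]];
          [contradiction (Eirr u) | reflexivity | contradiction].
      * exists (sigma (c x u)); split; [right; right; split; auto |].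
        intros s Hk; destruct (looped_coloring_cases Hk) as [[-> _] | [[_ [Hxu _]] | [_ [_ [-> _]]]]];
          [contradiction (Eirr u) | contradiction | reflexivity].
  - intros x u s x' u' Hk Hk' Hne.
    exact (looped_strong_condition Hk Hk' Hne).
Qed.

End LoopedCover.

(* Γ1 : Γ2 and ℰ are, definitionally, the tensor product of the looped cover
   of Γ1 with Γ2 and the product of the looped coloring with ℰ2. *)
Theorem lemma5p1 (V1 V2 W2 C C2 : Type)
  (E1 : V1 -> V1 -> Prop) (E2 : V2 -> W2 -> Prop)
  (Sc Sl Sp : C -> Prop) (S2 : C2 -> Prop)
  (c1 : V1 -> V1 -> C) (col2 : V2 -> W2 -> C2 -> Prop)
  (sigma : C -> C) (O : V1 -> V1 -> Prop) (vc : V1 -> C)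
  (hG1 : simple_graph E1)
  (hc1 : strong_edge_coloring E1 c1 Sc)
  (hc2 : strong_bip_edge_coloring E2 col2 S2)
  (hdisj : forall s, ~ (Sc s /\ Sl s))
  (hsigma : bijection_on sigma Sc Sl)
  (hO : orientation E1 O)
  (hdisj' : forall s, ~ (Sp s /\ (Sc s \/ Sl s)))
  (hvc : proper_vertex_coloring E1 vc Sp) :
  strong_bip_edge_coloring (colon_edge E1 E2)
    (colon_coloring O c1 sigma vc col2)
    (fun t : C * C2 => (Sp (fst t) \/ Sc (fst t) \/ Sl (fst t)) /\ S2 (snd t)).
Proof.
  pose proof (looped_strong_coloring _ _ _ _ _ _ _ _ _ _
                hG1 hc1 hdisj hsigma hO hdisj' hvc) as Hlooped.
  exact (tensor_strong_coloring _ _ _ _ _ _ _ _ _ _ _ _ Hlooped hc2).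
Qed.
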